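(* There is an absolute constant $K$ such that for every finite program $\Omega$ with weight constraints in which all weights $w_i$ are integers, the number of weight atoms (atoms of the forms $q_{w\le S}$, $q_{w<S}$) occurring in $[\Omega]^{nn}$ is at most $K\sum_C (L(C)+1)(W(C)+1)$, the sum ranging over all weight constraints $C$ occurring in $\Omega$; in the paper's notation, this number is $O\big(\sum_C L(C)\cdot W(C)\big)$.
   Context: A rule element is a literal $l$ or $\mathit{not}\ l$ (literals are atoms or classically negated atoms $\neg a$). A weight constraint $C$ is $L\le\{c_1=w_1,\dots,c_m=w_m\}\le U$ with $L,U$ reals or $\pm\infty$, rule elements $c_i$ ($m\ge0$), nonnegative real weights $w_i$; its length is $L(C)=m$ and its weight is $W(C)=w_1+\dots+w_m$. A rule with weight constraints is $C_0\leftarrow C_1,\dots,C_n$; the rule elements of $C_0$ are its positive/negative head elements; a program with weight constraints is a set of such rules. Nonnested translation. For each literal $l$ there is a new atom $q_{\mathit{not}\,l}$, and for each value $w$ and each expression $S=\{c_1=w_1,\dots,c_m=w_m\}$ new atoms $q_{w\le S}$ and $q_{w<S}$ (weight atoms). For $m>0$, $S'=\{c_1=w_1,\dots,c_{m-1}=w_{m-1}\}$. A program $\Pi$ (set of rules $\mathit{Head}\leftarrow\mathit{Body}$, heads literals or $\bot$, bodies conjunctions of literals possibly prefixed by $\mathit{not}$) is closed if: for each atom $q_{w\le S}$ occurring in $\Pi$, $\Pi$ contains the fact $q_{w\le S}$ if $w\le0$, and the rules $q_{w\le S}\leftarrow q_{w\le S'}$ and $q_{w\le S}\leftarrow c_m,q_{w-w_m\le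 S'}$ if $0<w\le w_1+\dots+w_m$; for each atom $q_{w<S}$ occurring in $\Pi$, $\Pi$ contains the fact $q_{w<S}$ if $w<0$, and the rules $q_{w<S}\leftarrow q_{w<S'}$ and $q_{w<S}\leftarrow c_m,q_{w-w_m<S'}$ if $0\le w<w_1+\dots+w_m$. $[L\le S\le U]^{nn}$ is the conjunction $q_{L\le S},\mathit{not}\,q_{U<S}$. $[\Omega]^{nn}$ is the smallest closed program containing, for every rule $L_0\le S_0\le U_0\leftarrow C_1,\dots,C_n$ of $\Omega$ and each of its positive head elements $l$, the rules $q_{\mathit{not}\,l}\leftarrow\mathit{not}\,l$ and $l\leftarrow\mathit{not}\,q_{\mathit{not}\,l},[C_1]^{nn},\dots,[C_n]^{nn}$, and the rules $\bot\leftarrow\mathit{not}\,q_{L_0\le S_0},[C_1]^{nn},\dots,[C_n]^{nn}$ and $\bot\leftarrow q_{U_0<S_0},[C_1]^{nn},\dots,[C_n]^{nn}$. *)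

From Stdlib Require Import Reals List.
From Coquelicot Require Import Rbar.
Import ListNotations.
Open Scope R_scope.

Set Implicit Arguments.

Inductive literal (A : Type) : Type :=
| LPos : A -> literal A
| LNeg : A -> literal A.

Inductive rule_elem (A : Type) : Type :=
| ELit : literal A -> rule_elem A
| ENot : literal A -> rule_elem A.

Definition wexpr (A : Type) := list (rule_elem A * R).

Record wconstraint (A : Type) : Type := WC {
  wc_lo : Rbar; wc_expr : wexpr A; wc_hi : Rbar }.

Record wrule (A : Type) : Type := WR {
  wr_head : wconstraint A; wr_body : list (wconstraint A) }.

Definition wprogram (A : Type) := list (wrule A).

Definition wsum (A : Type) (S : wexpr A) : R :=
  fold_right (fun p acc => snd p + acc) 0 S.

Definition cLen (A : Type) (C : wconstraint A) : nat := length (wc_expr C).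
Definition cWeight (A : Type) (C : wconstraint A) : R := wsum (wc_expr C).

Definition occurs_constraint (A : Type) (Om : wprogram A) (C : wconstraint A) : Prop :=
  exists r, In r Om /\ (C = wr_head r \/ In C (wr_body r)).

Inductive natom (A : Type) : Type :=
| Orig : A -> natom A
| QNot : literal A -> natom A
| QLe : Rbar -> wexpr A -> natom A
| QLt : Rbar -> wexpr A -> natom A.

Definition is_weight_atom (A : Type) (x : natom A) : Prop :=
  exists w S, x = QLe w S \/ x = QLt w S.

Inductive nlit (A : Type) : Type :=
| NPos : natom A -> nlit A
| NNeg : natom A -> nlit A.

Definition nlit_atom (A : Type) (l : nlit A) : natom A :=
  match l with NPos x => x | NNeg x => x end.

Inductive nbelem (A : Type) : Type :=
| BLit : nlit A -> nbelem A
| BNot : nlit A -> nbelem A.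

Definition nbelem_atom (A : Type) (b : nbelem A) : natom A :=
  match b with BLit l => nlit_atom l | BNot l => nlit_atom l end.

(** rule Head <- Body; head [None] stands for bottom *)
Record nrule (A : Type) : Type := NR {
  nr_head : option (nlit A); nr_body : list (nbelem A) }.

Definition nprogram (A : Type) := nrule A -> Prop.

Definition occurs_in_rule (A : Type) (x : natom A) (r : nrule A) : Prop :=
  (exists l, nr_head r = Some l /\ nlit_atom l = x) \/
  (exists b, In b (nr_body r) /\ nbelem_atom b = x).

Definition occurs_in_prog (A : Type) (x : natom A) (P : nprogram A) : Prop :=
  exists r, P r /\ occurs_in_rule x r.

Definition lit_emb (A : Type) (l : literal A) : nlit A :=
  match l with LPos a => NPos (Orig a) | LNeg a => NNeg (Orig a) end.

Definition elem_emb (A : Type) (c : rule_elem A) : nbelem A :=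
  match c with ELit l => BLit (lit_emb l) | ENot l => BNot (lit_emb l) end.

Definition fact (A : Type) (x : natom A) : nrule A := NR (Some (NPos x)) [].

Definition closed_prog (A : Type) (P : nprogram A) : Prop :=
  (forall w S, occurs_in_prog (QLe w S) P ->
     (Rbar_le w (Finite 0) -> P (fact (QLe w S))) /\
     (forall S' c wm, S = S' ++ [(c, wm)] ->
        Rbar_lt (Finite 0) w -> Rbar_le w (Finite (wsum S)) ->
        P (NR (Some (NPos (QLe w S))) [BLit (NPos (QLe w S'))]) /\
        P (NR (Some (NPos (QLe w S)))
              [elem_emb c; BLit (NPos (QLe (Rbar_minus w (Finite wm)) S'))]))) /\
  (forall w S, occurs_in_prog (QLt w S) P ->
     (Rbar_lt w (Finite 0) -> P (fact (QLt w S))) /\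
     (forall S' c wm, S = S' ++ [(c, wm)] ->
        Rbar_le (Finite 0) w -> Rbar_lt w (Finite (wsum S)) ->
        P (NR (Some (NPos (QLt w S))) [BLit (NPos (QLt w S'))]) /\
        P (NR (Some (NPos (QLt w S)))
              [elem_emb c; BLit (NPos (QLt (Rbar_minus w (Finite wm)) S'))]))).

Definition nn_constraint (A : Type) (C : wconstraint A) : list (nbelem A) :=
  [BLit (NPos (QLe (wc_lo C) (wc_expr C)));
   BNot (NPos (QLt (wc_hi C) (wc_expr C)))].

Definition nn_body (A : Type) (Cs : list (wconstraint A)) : list (nbelem A) :=
  flat_map (@nn_constraint A) Cs.

Definition base_rules (A : Type) (Om : wprogram A) (r : nrule A) : Prop :=
  exists rw, In rw Om /\
   let C0 := wr_head rw in
   let B := nn_body (wr_body rw) in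
   ((exists l wl, In (ELit l, wl) (wc_expr C0) /\
       (r = NR (Some (NPos (QNot l))) [BNot (lit_emb l)] \/
        r = NR (Some (lit_emb l)) (BNot (NPos (QNot l)) :: B))) \/
    r = NR None (BNot (NPos (QLe (wc_lo C0) (wc_expr C0))) :: B) \/
    r = NR None (BLit (NPos (QLt (wc_hi C0) (wc_expr C0))) :: B)).

(** [Omega]^nn: the smallest closed program containing the base rules
    (intersection of all such programs; closedness is preserved by intersections) *)
Definition nn_translation (A : Type) (Om : wprogram A) : nprogram A :=
  fun r => forall P : nprogram A,
    closed_prog P -> (forall r', base_rules Om r' -> P r') -> P r.

From Stdlib Require Import Reals List Lia Lra ZArith.
From Coquelicot Require Import Rbar.
Import ListNotations.
Open Scope R_scope.
Set Implicit Arguments.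
Unset Strict Implicit.

(* Every weight atom of [Omega]^nn has the form q_{L-j <= S} or q_{U-j < S},
   where L <= S_C <= U is a constraint of Omega, S is a prefix of S_C and the
   natural number j is at most the weight of the dropped suffix: the base rules
   only mention j = 0 and S = S_C, and each closure rule removes the last element
   (c_m = w_m) of S, leaving w unchanged or lowering it by the integer w_m.
   Hence the rules mentioning only such weight atoms form a closed program
   containing the base rules, and so contain [Omega]^nn.  Since the weights are
   integers, j takes fewer than W(C) + 1 values and S ranges over L(C) + 1
   prefixes, so K = 2 works. *)

Section Shifted_prefixes.

Variable A : Type.
Implicit Types (T S : wexpr A) (b w : Rbar).

Definition nat_weighted T : Prop := forall p, In p T -> exists m, snd p = INR m.

Definition Rbar_sub_nat b (j : nat) : Rbar := Rbar_minus b (Finite (INR j)).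

Definition shifted_prefix T b w S : Prop :=
  exists S'' (j : nat), S ++ S'' = T /\ INR j <= wsum S'' /\ w = Rbar_sub_nat b j.

Lemma Rbar_sub_nat_0 b : Rbar_sub_nat b 0 = b.
Proof. destruct b; unfold Rbar_sub_nat, Rbar_minus; simpl; auto. f_equal; ring. Qed.

Lemma Rbar_sub_nat_add b j m :
  Rbar_minus (Rbar_sub_nat b j) (Finite (INR m)) = Rbar_sub_nat b (j + m).
Proof.
  destruct b; unfold Rbar_sub_nat, Rbar_minus; simpl; auto.
  rewrite plus_INR. f_equal; ring.
Qed.

Lemma wsum_app T T' : wsum (T ++ T') = wsum T + wsum T'.
Proof.
  induction T as [|p T IH]; simpl; [ring|].
  unfold wsum in *; simpl. rewrite IH; ring.
Qed.

Lemma wsum_cons p T : wsum (p :: T) = snd p + wsum T.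
Proof. reflexivity. Qed.

Lemma nat_weighted_app T T' : nat_weighted (T ++ T') -> nat_weighted T /\ nat_weighted T'.
Proof. intros HT; split; intros p Hp; apply HT, in_or_app; auto. Qed.

Lemma wsum_nat_weighted_ge0 T : nat_weighted T -> 0 <= wsum T.
Proof.
  induction T as [|p T IH]; intros HT; [unfold wsum; simpl; lra|].
  rewrite wsum_cons.
  destruct (HT p (or_introl eq_refl)) as [m ->].
  assert (0 <= wsum T) by (apply IH; intros q Hq; apply HT; right; auto).
  pose proof (pos_INR m). lra.
Qed.

Lemma shifted_prefix_refl T b : shifted_prefix T b b T.
Proof.
  exists [], 0%nat. rewrite app_nil_r, Rbar_sub_nat_0.
  split; [|split]; auto. unfold wsum; simpl; lra.
Qed.

Lemma shifted_prefix_drop_last T b w S c wm :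
  nat_weighted T -> shifted_prefix T b w (S ++ [(c, wm)]) ->
  shifted_prefix T b w S /\ shifted_prefix T b (Rbar_minus w (Finite wm)) S.
Proof.
  intros HT [S'' [j [HS [Hj ->]]]].
  rewrite <- app_assoc in HS. simpl in HS.
  assert (Hsuffix : nat_weighted ((c, wm) :: S'')).
  { rewrite <- HS in HT. apply (proj2 (nat_weighted_app HT)). }
  destruct (Hsuffix _ (or_introl eq_refl)) as [m Hm]. simpl in Hm. subst wm.
  pose proof (wsum_nat_weighted_ge0 (fun p Hp => Hsuffix p (or_intror Hp))).
  pose proof (pos_INR m).
  split; exists ((c, INR m) :: S''); [exists j | exists (j + m)%nat];
    rewrite ?Rbar_sub_nat_add, wsum_cons, ?plus_INR; simpl; repeat split; auto; lra.
Qed.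

Definition shifted_prefixes T b (n : nat) : list (Rbar * wexpr A) :=
  list_prod (map (Rbar_sub_nat b) (seq 0 n))
            (map (fun k => firstn k T) (seq 0 (S (length T)))).

Lemma length_shifted_prefixes T b n :
  length (shifted_prefixes T b n) = (n * S (length T))%nat.
Proof.
  unfold shifted_prefixes. rewrite length_prod, !length_map, !length_seq. reflexivity.
Qed.

Lemma shifted_prefix_in T b n w S :
  nat_weighted T -> wsum T < INR n ->
  shifted_prefix T b w S -> In (w, S) (shifted_prefixes T b n).
Proof.
  intros HT Hn [S'' [j [HS [Hj ->]]]].
  apply in_prod; apply in_map_iff.
  - exists j. split; auto. apply in_seq. split; [lia|].
    rewrite <- HS in HT. destruct (nat_weighted_app HT) as [HS' _].
    pose proof (wsum_nat_weighted_ge0 HS').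
    rewrite <- HS, wsum_app in Hn.
    simpl. apply INR_lt. lra.
  - exists (length S). split.
    + rewrite <- HS, firstn_app, firstn_all, Nat.sub_diag. apply app_nil_r.
    + apply in_seq. rewrite <- HS, length_app. lia.
Qed.

End Shifted_prefixes.

Section Invariant.

Variables (A : Type) (Om : wprogram A) (cs : list (wconstraint A)).
Hypothesis cs_nat_weighted : forall C, In C cs -> nat_weighted (wc_expr C).
Hypothesis occurring_in_cs : forall C, occurs_constraint Om C -> In C cs.

Definition admissible_atom (x : natom A) : Prop :=
  match x with
  | QLe w E => exists C, In C cs /\ shifted_prefix (wc_expr C) (wc_lo C) w E
  | QLt w E => exists C, In C cs /\ shifted_prefix (wc_expr C) (wc_hi C) w E
  | _ => True
  end.

Definition admissible_rule (r : nrule A) : Prop :=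
  forall x, occurs_in_rule x r -> admissible_atom x.

Lemma admissible_rule_intro h body :
  (forall l, h = Some l -> admissible_atom (nlit_atom l)) ->
  (forall e, In e body -> admissible_atom (nbelem_atom e)) ->
  admissible_rule (NR h body).
Proof.
  intros Hh Hb x [[l [Hl <-]] | [e [He <-]]]; [apply Hh | apply Hb]; auto.
Qed.

Lemma admissible_elem_emb (c : rule_elem A) : admissible_atom (nbelem_atom (elem_emb c)).
Proof. destruct c as [[a|a]|[a|a]]; exact I. Qed.

Lemma admissible_lit_emb (l : literal A) : admissible_atom (nlit_atom (lit_emb l)).
Proof. destruct l; exact I. Qed.

Lemma admissible_constraint_atoms C : In C cs ->
  admissible_atom (QLe (wc_lo C) (wc_expr C)) /\ admissible_atom (QLt (wc_hi C) (wc_expr C)).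
Proof. intros HC; split; exists C; split; auto; apply shifted_prefix_refl. Qed.

Lemma admissible_nn_body Cs e :
  (forall C, In C Cs -> In C cs) -> In e (nn_body Cs) -> admissible_atom (nbelem_atom e).
Proof.
  intros HCs He. apply in_flat_map in He as [C [HC He]].
  destruct He as [<- | [<- | []]]; apply (admissible_constraint_atoms (HCs C HC)).
Qed.

Lemma admissible_rule_closed : closed_prog admissible_rule.
Proof.
  split; intros w S [r [Hr Hocc]]; destruct (Hr _ Hocc) as [C [HC HCS]]; split.
  1, 3: intros _; apply admissible_rule_intro; [intros l [= <-]; exists C; auto | intros e []].
  all: intros S' c wm -> _ _;
    destruct (shifted_prefix_drop_last (cs_nat_weighted HC) HCS) as [Hkeep Hlower];
    split; apply admissible_rule_intro; try (intros l [= <-]; exists C; now auto);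
    [intros e [<- | []] | intros e [<- | [<- | []]]];
    try apply admissible_elem_emb; exists C; auto.
Qed.

Lemma base_rule_admissible r : base_rules Om r -> admissible_rule r.
Proof.
  intros [rw [Hrw Hr]].
  assert (Hhead : In (wr_head rw) cs) by (apply occurring_in_cs; exists rw; auto).
  assert (Hbody : forall C, In C (wr_body rw) -> In C cs)
    by (intros C HC; apply occurring_in_cs; exists rw; auto).
  destruct Hr as [[l [wl [_ [-> | ->]]]] | [-> | ->]]; apply admissible_rule_intro.
  - intros l' [= <-]; exact I.
  - intros e [<- | []]; apply admissible_lit_emb.
  - intros l' [= <-]; apply admissible_lit_emb.
  - intros e [<- | He]; [exact I | exact (admissible_nn_body Hbody He)].
  - discriminate.
  - intros e [<- | He];
      [apply (admissible_constraint_atoms Hhead) | exact (admissible_nn_body Hbody He)].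
  - discriminate.
  - intros e [<- | He];
      [apply (admissible_constraint_atoms Hhead) | exact (admissible_nn_body Hbody He)].
Qed.

Lemma nn_translation_admissible x : occurs_in_prog x (nn_translation Om) -> admissible_atom x.
Proof.
  intros [r [Hr Hocc]]. exact (Hr _ admissible_rule_closed base_rule_admissible x Hocc).
Qed.

End Invariant.

Definition weight_ceil (W : R) : nat := Z.to_nat (up W).

Lemma weight_ceil_spec W : 0 <= W -> W < INR (weight_ceil W) <= W + 1.
Proof.
  intros HW. unfold weight_ceil. destruct (archimed W) as [H1 H2].
  assert (0 <= up W)%Z by (apply le_IZR; lra).
  rewrite INR_IZR_INZ, Z2Nat.id; auto. lra.
Qed.

Definition weight_atoms (A : Type) (C : wconstraint A) : list (natom A) :=
  map (fun p => QLe (fst p) (snd p))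
      (shifted_prefixes (wc_expr C) (wc_lo C) (weight_ceil (cWeight C))) ++
  map (fun p => QLt (fst p) (snd p))
      (shifted_prefixes (wc_expr C) (wc_hi C) (weight_ceil (cWeight C))).

Lemma length_weight_atoms A (C : wconstraint A) : 0 <= cWeight C ->
  INR (length (weight_atoms C)) <= 2 * ((INR (cLen C) + 1) * (cWeight C + 1)).
Proof.
  intros HW. destruct (weight_ceil_spec HW) as [_ Hceil].
  unfold weight_atoms. rewrite length_app, !length_map, !length_shifted_prefixes.
  rewrite plus_INR, !mult_INR, S_INR.
  fold (cLen C). pose proof (pos_INR (cLen C)).
  assert (INR (weight_ceil (cWeight C)) * (INR (cLen C) + 1) <=
          (cWeight C + 1) * (INR (cLen C) + 1)) by (apply Rmult_le_compat_r; lra).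
  lra.
Qed.

Lemma length_flat_map_weight_atoms A (cs : list (wconstraint A)) :
  (forall C, In C cs -> 0 <= cWeight C) ->
  INR (length (flat_map (@weight_atoms A) cs)) <=
  2 * fold_right (fun C acc => (INR (cLen C) + 1) * (cWeight C + 1) + acc) 0 cs.
Proof.
  induction cs as [|C cs IH]; intros HW; simpl; [lra|].
  rewrite length_app, plus_INR.
  pose proof (length_weight_atoms (HW C (or_introl eq_refl))).
  pose proof (IH (fun C' HC' => HW C' (or_intror HC'))).
  lra.
Qed.

Lemma admissible_weight_atom_in A (cs : list (wconstraint A)) x :
  (forall C, In C cs -> nat_weighted (wc_expr C)) ->
  is_weight_atom x -> admissible_atom cs x -> In x (flat_map (@weight_atoms A) cs).
Proof.
  intros Hnat [w [S [-> | ->]]] [C [HC HCS]]; apply in_flat_map; exists C;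
    split; auto; unfold weight_atoms; apply in_or_app;
    [left | right]; apply (in_map (fun p => _ (fst p) (snd p)) _ (w, S));
    apply shifted_prefix_in; auto;
    apply weight_ceil_spec, wsum_nat_weighted_ge0; auto.
Qed.

Lemma nonneg_integer_weights A (T : wexpr A) :
  (forall c w, In (c, w) T -> 0 <= w /\ exists z : Z, w = IZR z) -> nat_weighted T.
Proof.
  intros HT [c w] Hp. destruct (HT c w Hp) as [Hw [z ->]].
  exists (Z.to_nat z). simpl. rewrite INR_IZR_INZ, Z2Nat.id; auto.
  apply le_IZR; auto.
Qed.

Theorem proposition3 :
  exists K : R,
  forall (A : Type) (Om : wprogram A),
    (forall C, occurs_constraint Om C ->
       forall c w, In (c, w) (wc_expr C) -> 0 <= w /\ exists z : Z, w = IZR z) ->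
    forall cs : list (wconstraint A),
      NoDup cs -> (forall C, In C cs <-> occurs_constraint Om C) ->
      exists s : list (natom A),
        (forall x, is_weight_atom x -> occurs_in_prog x (nn_translation Om) -> In x s) /\
        INR (length s) <=
          K * fold_right (fun C acc => (INR (cLen C) + 1) * (cWeight C + 1) + acc) 0 cs.
Proof.
  exists 2. intros A Om Hw cs _ Hcs.
  assert (Hnat : forall C, In C cs -> nat_weighted (wc_expr C))
    by (intros C HC; apply nonneg_integer_weights, Hw, Hcs, HC).
  exists (flat_map (@weight_atoms A) cs). split.
  - intros x Hx Hocc. apply admissible_weight_atom_in; auto.
    apply (nn_translation_admissible Hnat (fun C => proj2 (Hcs C)) Hocc).
  - apply length_flat_map_weight_atoms.
    intros C HC. apply wsum_nat_weighted_ge0, Hnat, HC.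
Qed.
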